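(* Let $w=(u,v)\in\mathrm{WI}_n\times\mathrm{Cay}_n$. Then $\mathrm{Des}(u)\subseteq\mathrm{Des}(v)$ if and only if $(w^T)^T=w$. Moreover, $T$ is an involution on $\mathrm{Bur}_n$.
   Context: $\mathrm{Cay}_n$ is the set of Cayley permutations of length $n$ (words of positive integers in which every integer from $1$ to the maximum occurs), and $\mathrm{WI}_n$ the set of weakly increasing elements of $\mathrm{Cay}_n$. A pair $(u,v)\in\mathrm{WI}_n\times\mathrm{Cay}_n$ is viewed as a biword with columns $\binom{u(i)}{v(i)}$, $i=1,\dots,n$. The Burge transpose $(u,v)^T$ is obtained by turning every column $\binom{a}{b}$ upside down into $\binom{b}{a}$ and then sorting the columns in increasing order of top entry, breaking ties by decreasing order of bottom entry; it again lies in $\mathrm{WI}_n\times\mathrm{Cay}_n$. The weak descent set of a word $v$ of length $n$ is $\mathrm{Des}(v)=\{i\in[n-1]:v(i)\ge v(i+1)\}$. $\mathrm{Bur}_n=\{(u,v)\in\mathrm{WI}_n\times\mathrm{Cay}_n:\mathrm{Des}(u)\subseteq\mathrm{Des}(v)\}$ (Burge words). *)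

(* Words are seq nat; positions are 1-indexed as in the paper. *)
From mathcomp Require Import all_boot.
Set Implicit Arguments. Unset Strict Implicit. Unset Printing Implicit Defensive.

Definition wmax (v : seq nat) : nat := foldr maxn 0 v.

Definition Cay (n : nat) (v : seq nat) : bool :=
  [&& size v == n, all (fun x => 0 < x) v & all (fun k => k \in v) (iota 1 (wmax v))].

Definition WI (n : nat) (u : seq nat) : bool := Cay n u && sorted leq u.

Definition letter (v : seq nat) (i : nat) : nat := nth 0 v i.-1.

Definition Des (v : seq nat) : seq nat :=
  [seq i <- iota 1 (size v).-1 | letter v (i.+1) <= letter v i].

Definition burge_le (c d : nat * nat) : bool :=
  (c.1 < d.1) || ((c.1 == d.1) && (d.2 <= c.2)).

Definition burgeT (w : seq nat * seq nat) : seq nat * seq nat :=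
  let cols := sort burge_le [seq (p.2, p.1) | p <- zip w.1 w.2] in
  (unzip1 cols, unzip2 cols).

Definition Bur (n : nat) (w : seq nat * seq nat) : bool :=
  [&& WI n w.1, Cay n w.2 & all (fun i => i \in Des w.2) (Des w.1)].

(* Read a biword as its sequence of columns. Transposing flips the columns and
   sorts them for the total order [burge_le], so transposing twice just sorts
   the original columns: hence (u, v) is fixed by T^2 exactly when its columns
   are already [burge_le]-sorted. For weakly increasing u this says that
   u(i) = u(i+1) forces v(i) >= v(i+1), i.e. Des(u) is contained in Des(v).
   The columns of w^T are sorted by construction, so w^T is again a Burge word,
   its letters being permutations of those of w. *)
From mathcomp Require Import all_boot zify.
Set Implicit Arguments. Unset Strict Implicit. Unset Printing Implicit Defensive.

Definition flip (c : nat * nat) : nat * nat := (c.2, c.1).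

Lemma flipK : involutive flip.
Proof. by case. Qed.

Lemma burge_le_total : total burge_le.
Proof. by move=> [a b] [c d]; rewrite /burge_le /=; lia. Qed.

Lemma burge_le_trans : transitive burge_le.
Proof. by move=> [a b] [c d] [e f]; rewrite /burge_le /=; lia. Qed.

Lemma burge_le_anti : antisymmetric burge_le.
Proof.
by move=> [a b] [c d]; rewrite /burge_le /= => le_cd; apply/eqP; rewrite xpair_eqE; lia.
Qed.

Lemma burge_le_pair a b a' b' :
  a <= a' -> burge_le (a, b) (a', b') = (a' <= a) ==> (b' <= b).
Proof. by rewrite /burge_le /=; lia. Qed.

Lemma zip_burgeT w :
  zip (burgeT w).1 (burgeT w).2 = sort burge_le (map flip (zip w.1 w.2)).
Proof. exact: zip_unzip. Qed.

Lemma burgeTT w :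
  burgeT (burgeT w) =
  (unzip1 (sort burge_le (zip w.1 w.2)), unzip2 (sort burge_le (zip w.1 w.2))).
Proof.
set c := zip w.1 w.2.
have sort_flip2 : sort burge_le (map flip (sort burge_le (map flip c))) = sort burge_le c.
  apply/(perm_sortP burge_le_total burge_le_trans burge_le_anti).
  by rewrite -{2}(mapK flipK c) perm_map ?perm_sort.
by rewrite {1}/burgeT zip_burgeT sort_flip2.
Qed.

Lemma burgeTT_id u v : size u = size v ->
  burgeT (burgeT (u, v)) = (u, v) <-> sorted burge_le (zip u v).
Proof.
move=> uv; rewrite burgeTT /=; split.
- by case=> {2}<- {2}<-; rewrite zip_unzip (sort_sorted burge_le_total).
- by move=> /(sorted_sort burge_le_trans) ->; rewrite unzip1_zip ?unzip2_zip ?uv.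
Qed.

Lemma sorted_zip_burgeT w : sorted burge_le (zip (burgeT w).1 (burgeT w).2).
Proof. by rewrite zip_burgeT (sort_sorted burge_le_total). Qed.

Lemma burgeTT_burgeT w : burgeT (burgeT (burgeT w)) = burgeT w.
Proof.
rewrite [burgeT w]surjective_pairing burgeTT_id ?sorted_zip_burgeT //.
by rewrite /burgeT /= !size_map.
Qed.

Lemma sorted_burgeT1 w : sorted leq (burgeT w).1.
Proof.
rewrite sorted_map; apply: sub_sorted (sort_sorted burge_le_total _).
by move=> [a b] [c d]; rewrite /burge_le /=; lia.
Qed.

Lemma perm_burgeT1 u v : size u = size v -> perm_eq (burgeT (u, v)).1 v.
Proof.
move=> uv; rewrite -[X in perm_eq _ X](unzip2_zip (eq_leq (esym uv))).
have -> : unzip2 (zip u v) = unzip1 (map flip (zip u v)) by rewrite /unzip1 -map_comp.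
by apply: perm_map; rewrite perm_sort.
Qed.

Lemma perm_burgeT2 u v : size u = size v -> perm_eq (burgeT (u, v)).2 u.
Proof.
move=> uv; rewrite -[X in perm_eq _ X](unzip1_zip (eq_leq uv)).
have -> : unzip1 (zip u v) = unzip2 (map flip (zip u v)) by rewrite /unzip2 -map_comp.
by apply: perm_map; rewrite perm_sort.
Qed.

Lemma mem_Des v i : (i \in Des v) = (0 < i < size v) && (nth 0 v i <= nth 0 v i.-1).
Proof.
rewrite /Des mem_filter mem_iota /letter andbC; congr (_ && _).
by case: i => //= i; case: (size v) => //= m; lia.
Qed.

Lemma subset_DesP u v : size u = size v ->
  {subset Des u <= Des v} <->
  (forall i, i.+1 < size u -> nth 0 u i.+1 <= nth 0 u i -> nth 0 v i.+1 <= nth 0 v i).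
Proof.
move=> uv; split=> [sub i lt_iu le_u | desD [|i]]; rewrite ?mem_Des //= -?uv.
- by have := sub i.+1; rewrite !mem_Des /= -uv lt_iu le_u => /(_ isT) /andP[].
- by case/andP=> lt_iu le_u; rewrite lt_iu desD.
Qed.

Lemma sorted_zip_Des u v : size u = size v -> sorted leq u ->
  sorted burge_le (zip u v) <-> {subset Des u <= Des v}.
Proof.
move=> uv /(sortedP 0) u_sorted; split.
- move=> /(sortedP (0, 0)) zs; apply/subset_DesP => // i lt_iu.
  have := zs i; rewrite size_zip -uv minnn !nth_zip // burge_le_pair ?u_sorted //.
  by move=> /(_ lt_iu) /implyP.
- move=> /(subset_DesP uv) desD; apply/(sortedP (0, 0)) => i.
  rewrite size_zip -uv minnn => lt_iu; rewrite !nth_zip // burge_le_pair ?u_sorted //.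
  by apply/implyP; exact: desD.
Qed.

Lemma wmaxE v : wmax v = \max_(x <- v) x.
Proof. by elim: v => [|x v IH]; rewrite ?big_nil ?big_cons //= IH. Qed.

Lemma perm_Cay n v v' : perm_eq v v' -> Cay n v = Cay n v'.
Proof.
move=> vv'; rewrite /Cay (perm_size vv') (perm_all _ vv') !wmaxE (perm_big _ vv').
by congr [&& _, _ & _]; apply: eq_all => k; apply: perm_mem.
Qed.

Lemma Cay_size n v : Cay n v -> size v = n.
Proof. by case/and3P=> /eqP. Qed.

Lemma Des_subset_burgeTT n u v : WI n u -> Cay n v ->
  {subset Des u <= Des v} <-> burgeT (burgeT (u, v)) = (u, v).
Proof.
move=> /andP[Cu u_sorted] Cv.
have uv : size u = size v by rewrite (Cay_size Cu) (Cay_size Cv).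
exact: iff_trans (iff_sym (sorted_zip_Des uv u_sorted)) (iff_sym (burgeTT_id uv)).
Qed.

Lemma Bur_burgeT n w : Bur n w -> Bur n (burgeT w).
Proof.
case: w => u v /= /and3P[/andP[Cu _] Cv _].
have uv : size u = size v by rewrite (Cay_size Cu) (Cay_size Cv).
have WI1 : WI n (burgeT (u, v)).1.
  by rewrite /WI sorted_burgeT1 (perm_Cay _ (perm_burgeT1 uv)) Cv.
have Cay2 : Cay n (burgeT (u, v)).2 by rewrite (perm_Cay _ (perm_burgeT2 uv)).
rewrite /Bur WI1 Cay2; apply/allP/(Des_subset_burgeTT WI1 Cay2).
by rewrite -surjective_pairing burgeTT_burgeT.
Qed.

Theorem lemma3p1 (n : nat) :
  (forall u v : seq nat, WI n u -> Cay n v ->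
     ({subset Des u <= Des v} <-> burgeT (burgeT (u, v)) = (u, v))) /\
  (forall w : seq nat * seq nat, Bur n w ->
     Bur n (burgeT w) /\ burgeT (burgeT w) = w).
Proof.
split=> [u v|w Bw]; first exact: Des_subset_burgeTT.
split; first exact: Bur_burgeT.
case: w Bw => u v /and3P[WIu Cv Dsub].
exact/(Des_subset_burgeTT WIu Cv)/allP.
Qed.
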